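(* Let $\mathcal{C}$ be a covering of a finite set $E$. For $x\in E$ let $N(x)=\bigcap\{K\in\mathcal{C}:x\in K\}$, and define $VH:2^E\to 2^E$ by $VH(X)=\bigcup\{N(x):x\in E,\ N(x)\cap X\neq\emptyset\}$. Then $VH$ is the closure operator of some matroid on $E$ if and only if $\{VH(\{x\}):x\in E\}$ forms a partition of $E$.
   Context: A covering of $E$ is a family of nonempty subsets of $E$ with union $E$. ''$\{VH(\{x\}):x\in E\}$ forms a partition'' means the distinct sets among the $VH(\{x\})$ are pairwise disjoint (their union is $E$ since $x\in VH(\{x\})$). The closure operator of a matroid with rank function $r$ is $cl(X)=\{a\in E:r(X\cup\{a\})=r(X)\}$. *)

From mathcomp Require Import all_boot.
Set Implicit Arguments. Unset Strict Implicit. Unset Printing Implicit Defensive.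

Definition matroid_rank (T : finType) (r : {set T} -> nat) : Prop :=
  [/\ (forall X : {set T}, r X <= #|X|),
      (forall X Y : {set T}, X \subset Y -> r X <= r Y) &
      (forall X Y : {set T}, r (X :|: Y) + r (X :&: Y) <= r X + r Y)].

Definition mclosure (T : finType) (r : {set T} -> nat) (X : {set T}) : {set T} :=
  [set a | r (a |: X) == r X].

Definition covering (T : finType) (C : {set {set T}}) : Prop :=
  (forall K, K \in C -> K != set0) /\ \bigcup_(K in C) K = [set: T].

Definition Nbhd (T : finType) (C : {set {set T}}) (x : T) : {set T} :=
  \bigcap_(K in C | x \in K) K.

Definition VH (T : finType) (C : {set {set T}}) (X : {set T}) : {set T} :=
  \bigcup_(x | Nbhd C x :&: X != set0) Nbhd C x.

From mathcomp Require Import all_boot.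
Set Implicit Arguments. Unset Strict Implicit. Unset Printing Implicit Defensive.

(* If VH is the closure of a matroid, that matroid is loopless since
   VH(∅) = ∅; in a loopless matroid "r {x, y} = 1" is an equivalence relation
   (by submodularity) whose classes are the closures of the singletons, so the
   sets VH {x} partition E.  Conversely, if they partition E, VH X is the union
   of the blocks met by X, which is the closure of the partition matroid whose
   rank counts the blocks met. *)

Section Matroid.
Variables (T : finType) (r : {set T} -> nat).
Hypothesis rank_r : matroid_rank r.
Hypothesis loopless : mclosure r set0 = set0.

Let rank_le_card := let: And3 R1 _ _ := rank_r in R1.
Let rank_mono := let: And3 _ R2 _ := rank_r in R2.
Let rank_submod := let: And3 _ _ R3 := rank_r in R3.

Lemma rank_set0 : r set0 = 0.
Proof. by apply/eqP; rewrite -leqn0 (leq_trans (rank_le_card _)) ?cards0. Qed.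

Lemma rank_set1 a : r [set a] = 1.
Proof.
have : a \notin mclosure r set0 by rewrite loopless inE.
rewrite inE setU0 rank_set0; have := rank_le_card [set a]; rewrite cards1.
by case: (r [set a]) => [|[|]].
Qed.

Lemma mem_mclosure1 x z : (z \in mclosure r [set x]) = (r [set z; x] == 1).
Proof. by rewrite inE rank_set1. Qed.

Lemma rank_set2C x y : r [set x; y] = r [set y; x].
Proof. by rewrite setUC. Qed.

Lemma rank_set2_trans x y z :
  r [set x; y] = 1 -> r [set y; z] = 1 -> r [set x; z] = 1.
Proof.
move=> rxy ryz; have submod := rank_submod [set x; y] [set y; z].
rewrite rxy ryz in submod.
have r_cap : 1 <= r ([set x; y] :&: [set y; z]).
  by rewrite -(rank_set1 y) rank_mono // subsetI !sub1set !inE !eqxx orbT.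
have r_cup : r ([set x; y] :|: [set y; z]) <= 1.
  by rewrite -(leq_add2r 1) (leq_trans _ submod) ?leq_add2l.
apply/eqP; rewrite eqn_leq (leq_trans _ r_cup) ?rank_mono //=.
  by rewrite -(rank_set1 x) rank_mono // sub1set !inE eqxx.
by rewrite subUset !sub1set !inE !eqxx ?orbT.
Qed.

Lemma mclosure1_partition : partition [set mclosure r [set x] | x : T] [set: T].
Proof.
have mem_cl1 x : x \in mclosure r [set x] by rewrite inE setUid.
apply/and3P; split.
- apply/eqP/setP=> z; rewrite inE; apply/bigcupP.
  by exists (mclosure r [set z]); [apply: imset_f | apply: mem_cl1].
- apply/trivIsetP=> _ _ /imsetP [x _ ->] /imsetP [y _ ->].
  apply: contraR; rewrite -setI_eq0 => /set0Pn [w /setIP []].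
  rewrite !mem_mclosure1 rank_set2C => /eqP rxw /eqP rwy.
  have rxy := rank_set2_trans rxw rwy.
  apply/eqP/setP=> z; rewrite !mem_mclosure1; apply/eqP/eqP=> rz.
    exact: rank_set2_trans rxy.
  by apply: rank_set2_trans rz _; rewrite rank_set2C.
- by apply/imsetP=> [[x _ cl_x0]]; have := mem_cl1 x; rewrite -cl_x0 inE.
Qed.

End Matroid.

Section BlockCount.
Variables (T rT : finType) (f : T -> rT).

Lemma card_imset_rank : matroid_rank (fun X : {set T} => #|f @: X|).
Proof.
split=> [X | X Y sXY | X Y]; first exact: leq_imset_card.
  exact/subset_leq_card/imsetS.
rewrite imsetU -(cardsUI (f @: X)) leq_add2l subset_leq_card //.
by rewrite subsetI !imsetS ?subsetIl ?subsetIr.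
Qed.

Lemma mclosure_card_imset X :
  mclosure (fun X : {set T} => #|f @: X|) X = [set a | f a \in f @: X].
Proof.
apply/setP=> a; rewrite !inE imsetU1 cardsU1.
by case: (f a \in f @: X); rewrite /= ?add0n ?eqxx // add1n (gtn_eqF (ltnSn _)).
Qed.

End BlockCount.

Section Neighbourhoods.
Variables (T : finType) (C : {set {set T}}).

(* The empty intersection is [set: T], so no covering assumption is needed. *)
Lemma Nbhd_refl x : x \in Nbhd C x.
Proof. by apply/bigcapP=> K /andP []. Qed.

Lemma VH_bigcup1 X : VH C X = \bigcup_(y in X) VH C [set y].
Proof.
have meet1 A y : (A :&: [set y] != set0) = (y \in A).
  by rewrite setI_eq0 disjoint_sym disjoints1 negbK.
apply/setP=> z; apply/bigcupP/bigcupP.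
  move=> [w /set0Pn [y /setIP [yNw yX]] zNw].
  by exists y => //; apply/bigcupP; exists w; rewrite ?meet1.
move=> [y yX /bigcupP [w]]; rewrite meet1 => yNw zNw.
by exists w => //; apply/set0Pn; exists y; apply/setIP.
Qed.

Lemma VH_set0 : VH C set0 = set0.
Proof. by rewrite VH_bigcup1 big_set0. Qed.

Lemma VH_set1_refl x : x \in VH C [set x].
Proof.
rewrite /VH; apply/bigcupP; exists x; last exact: Nbhd_refl.
by apply/set0Pn; exists x; rewrite in_setI Nbhd_refl set11.
Qed.

Lemma VH_partitionE X :
  partition [set VH C [set x] | x : T] [set: T] ->
  VH C X = [set a | VH C [set a] \in (fun x => VH C [set x]) @: X].
Proof.
case/and3P=> _ triv _; apply/setP=> a; rewrite inE VH_bigcup1.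
have block x : VH C [set x] \in [set VH C [set x] | x : T] by apply: imset_f.
apply/bigcupP/imsetP=> [[x xX aVx] | [x xX Vax]]; last first.
  by exists x; rewrite // -Vax VH_set1_refl.
exists x => //; rewrite -(def_pblock triv (block a) (VH_set1_refl a)).
exact: def_pblock.
Qed.

End Neighbourhoods.

Theorem theorem11 (T : finType) (C : {set {set T}}) :
  covering C ->
  ((exists r : {set T} -> nat,
       matroid_rank r /\ forall X : {set T}, VH C X = mclosure r X)
   <-> partition [set VH C [set x] | x : T] [set: T]).
Proof.
move=> _; split=> [[r [rank_r VH_cl]] | part].
  rewrite (eq_imset _ (fun x => VH_cl [set x])).
  by apply: mclosure1_partition; rewrite // -VH_cl VH_set0.
exists (fun X : {set T} => #|(fun x => VH C [set x]) @: X|).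
split=> [|X]; first exact: card_imset_rank.
by rewrite mclosure_card_imset VH_partitionE.
Qed.
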